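(* Let $P$ be a finite graded poset with rank function $\operatorname{rk}$. Then $\mathsf{Z}_{P,\operatorname{rk}}$ is entirely determined by the flag $f$-vector of $P$: if $P'$ is another finite graded poset such that for every finite strictly increasing sequence $a=(a_1<\cdots<a_k)$ of nonnegative integers the number of strict chains $c_1<\cdots<c_k$ in $P$ with $(\operatorname{rk}(c_1),\dots,\operatorname{rk}(c_k))=a$ equals the corresponding number for $P'$, then $\mathsf{Z}_{P,\operatorname{rk}}=\mathsf{Z}_{P',\operatorname{rk}}$.
   Context: $q$ is an indeterminate; $[n]_q=(q^n-1)/(q-1)$. A poset is graded if it has a height function increasing by exactly $1$ along every cover relation; $\operatorname{rk}$ is such a function with minimum value $0$ on each connected component. For a finite poset $P$ with height function $h$ ($h(x)<h(y)$ when $y$ covers $x$), the $q$-Zeta polynomial $\mathsf{Z}_{P,h}\in\mathbb{Q}(q)[x]$ is the unique polynomial with $\mathsf{Z}_{P,h}([n]_q)=\sum_{e_1\le\cdots\le e_{n-1}\text{ in }P}q^{h(e_1)+\cdots+h(e_{n-1})}$ for all $n\ge2$ (it exists). *)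

From HB Require Import structures.
From mathcomp Require Import all_boot all_order all_algebra fraction.
Set Implicit Arguments. Unset Strict Implicit. Unset Printing Implicit Defensive.
Import Order.TTheory GRing.Theory Num.Theory.

Definition Qq : fieldType := {fraction {poly rat}}.
Definition qvar : Qq := @FracField.tofrac {poly rat} 'X.

Definition qint (n : nat) : Qq := ((qvar ^+ n - 1) / (qvar - 1))%R.

Section Posets.
Context {d : Order.disp_t} {P : finPOrderType d}.
Local Open Scope order_scope.

Definition covers (x y : P) : bool :=
  (x < y) && [forall z : P, ~~ ((x < z) && (z < y))].

(* comparability relation; its connected components are those of the poset *)
Definition comparable_rel : rel P := fun x y => (x <= y) || (y <= x).

Definition is_rank_function (rk : P -> nat) : Prop :=
  (forall x y : P, covers x y -> rk y = (rk x).+1) /\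
  (forall x : P, exists y : P, connect comparable_rel x y /\ rk y = 0%N).

Definition nchains (rk : P -> nat) (a : seq nat) : nat :=
  #|[set c : (size a).-tuple P | sorted (fun u v : P => u < v) c &&
                                  (map rk c == a)]|.

Definition multichain_sum (h : P -> nat) (n : nat) : Qq :=
  (\sum_(t : n.-1.-tuple P | sorted (fun u v : P => (u <= v)%O) t)
      qvar ^+ (\sum_(x <- t) h x)%N)%R.

Definition is_qZeta (h : P -> nat) (Z : {poly Qq}) : Prop :=
  forall n : nat, (2 <= n)%N -> (Z.[qint n])%R = multichain_sum h n.

End Posets.

From HB Require Import structures.
From mathcomp Require Import all_boot all_order all_algebra fraction.
Set Implicit Arguments. Unset Strict Implicit. Unset Printing Implicit Defensive.
Import Order.TTheory GRing.Theory Num.Theory.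

(* A rank function is strictly monotone, so on a multichain e_1 <= ... <= e_m
   it is injective and the multichain is determined by its underlying strict
   chain together with its rank sequence s.  Hence the multichains with rank
   sequence s are in bijection with the strict chains with rank sequence
   undup s, and multichain_sum is a combination of flag f-numbers.  Since a
   polynomial is determined by its values at the infinitely many distinct
   points [n]_q, the q-Zeta polynomial depends only on the flag f-vector. *)

Local Open Scope ring_scope.

Lemma poly_eq_on_injective (R : idomainType) (f : nat -> R) (k : nat)
    (p q : {poly R}) :
  injective f -> (forall n, (k <= n)%N -> p.[f n] = q.[f n]) -> p = q.
Proof.
move=> f_inj pq; apply/eqP; rewrite -subr_eq0; apply/eqP.
apply: (@roots_geq_poly_eq0 _ _ [seq f n | n <- iota k (size (p - q))]).
- apply/allP => x /mapP[n]; rewrite mem_iota => /andP[kn _] ->.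
  by rewrite rootE hornerD hornerN pq // subrr.
- by rewrite map_inj_uniq ?iota_uniq.
- by rewrite size_map size_iota.
Qed.

Lemma qvar_sub1_neq0 : qvar - 1 != 0.
Proof.
rewrite /qvar -(rmorph1 (@FracField.tofrac {poly rat})) -rmorphB tofrac_eq0.
rewrite subr_eq0; apply/eqP => /(congr1 (size : {poly rat} -> nat)).
by rewrite size_polyX size_poly1.
Qed.

Lemma qint_inj : injective qint.
Proof.
move=> n m; rewrite /qint => /(congr1 (fun x => x * (qvar - 1))).
rewrite !divfK ?qvar_sub1_neq0 // => /addIr.
rewrite /qvar -!rmorphXn => /eqP; rewrite tofrac_eq => /eqP.
by move/(congr1 (size : {poly rat} -> nat)); rewrite !size_polyXn => -[].
Qed.

Lemma sum_by_fibres (T : finType) (U : eqType) (V : nmodType) (p : pred T)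
    (f : T -> U) (G : U -> V) (L : seq U) :
  uniq L -> (forall t, f t \in L) ->
  \sum_(t | p t) G (f t) = \sum_(u <- L) G u *+ #|[set t | p t & f t == u]|.
Proof.
move=> uniq_L f_L.
rewrite (eq_bigr (fun t => \sum_(u <- L) if u == f t then G u else 0)).
  rewrite exchange_big; apply: eq_bigr => u _.
  by rewrite -big_mkcondr -sumr_const; apply: eq_bigl => t; rewrite inE eq_sym.
move=> t _; rewrite -big_mkcond -big_filter filter_pred1_uniq //.
by rewrite big_seq1.
Qed.

Local Close Scope ring_scope.

Lemma sorted_le_total (d : Order.disp_t) (T : porderType d) (t : seq T) :
  sorted <=%O t -> {in t &, forall x y, (x <= y)%O || (y <= x)%O}.
Proof.
move=> st x y xt yt; have le_index := sorted_leq_index le_trans lexx st.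
case: (leqP (index x t) (index y t)) => [xy|/ltnW yx].
  by rewrite le_index.
by rewrite (le_index y x) ?orbT.
Qed.

Section RankFunction.
Context {d : Order.disp_t} {P : finPOrderType d} (rk : P -> nat).
Hypothesis rk_covers : forall x y : P, covers x y -> rk y = (rk x).+1.

Local Notation itv x y := [set v : P | (x <= v <= y)%O].

(* Induction on the size of the interval [x, y]: either y covers x, or a
   point strictly between x and y splits it into two smaller intervals. *)
Lemma covers_rk_lt : {homo rk : x y / (x < y)%O >-> (x < y)%N}.
Proof.
move=> x y; have [n] := ubnP #|itv x y|; elim: n x y => // n IHn x y.
rewrite ltnS => itv_n xy.
have [/rk_covers -> //|] := boolP (covers x y).
rewrite /covers xy negb_forall => /existsP[z]; rewrite negbK => /andP[xz zy].
have itv_xz : #|itv x z| < #|itv x y|.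
  apply/proper_card/properP; split.
    apply/subsetP => v; rewrite !inE => /andP[-> vz] /=.
    exact: le_trans vz (ltW zy).
  by exists y; rewrite !inE ?(ltW xy) ?lexx // (lt_geF zy) andbF.
have itv_zy : #|itv z y| < #|itv x y|.
  apply/proper_card/properP; split.
    apply/subsetP => v; rewrite !inE => /andP[zv ->]; rewrite andbT.
    exact: le_trans (ltW xz) zv.
  by exists x; rewrite !inE ?(ltW xy) ?lexx // (lt_geF xz).
apply: (@ltn_trans (rk z)); apply: IHn => //; exact: leq_trans itv_n.
Qed.

End RankFunction.

Section ChainsByRank.
Context {d : Order.disp_t} {P : finPOrderType d} (rk : P -> nat).
Hypothesis rk_lt : {homo rk : x y / (x < y)%O >-> (x < y)%N}.

Lemma rk_le : {homo rk : x y / (x <= y)%O >-> (x <= y)%N}.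
Proof. by move=> x y; rewrite le_eqVlt => /predU1P[->|/rk_lt/ltnW]. Qed.

Lemma chain_rk_mono (t : seq P) : sorted <=%O t ->
  {in t &, {mono rk : x y / (x <= y)%O >-> (x <= y)%N}}.
Proof.
move=> st x y xt yt; apply/idP/idP => [rk_xy|/rk_le //].
case/orP: (sorted_le_total st xt yt) => // /[dup] yx.
by rewrite le_eqVlt => /predU1P[->|/rk_lt]; rewrite ?lexx // ltnNge rk_xy.
Qed.

Lemma chain_rk_inj (t : seq P) : sorted <=%O t -> {in t &, injective rk}.
Proof.
move=> st x y xt yt rk_xy; apply/le_anti.
by rewrite -(chain_rk_mono st xt yt) -(chain_rk_mono st yt xt) rk_xy leqnn.
Qed.

Lemma undup_chain (t : seq P) : sorted <=%O t -> sorted <%O (undup t).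
Proof.
by move=> st; rewrite lt_sorted_uniq_le undup_uniq (undup_sorted le_trans).
Qed.

Lemma map_rk_undup (t : seq P) : sorted <=%O t ->
  map rk (undup t) = undup (map rk t).
Proof.
move=> st; apply: (irr_sorted_eq ltn_trans ltnn).
- exact: homo_sorted rk_lt _ (undup_chain st).
- rewrite ltn_sorted_uniq_leq undup_uniq (undup_sorted leq_trans) //.
  exact: homo_sorted rk_le _ st.
- by move=> r; rewrite mem_undup; apply: eq_mem_map; apply: mem_undup.
Qed.

Section ElemOfRank.
Variable x0 : P.

(* The element of rank r of the chain c; x0 is a junk value, returned when c
   has no element of rank r. *)
Definition elem_of_rank (c : seq P) (r : nat) : P :=
  nth x0 c (index r (map rk c)).

Lemma elem_of_rank_mem (c : seq P) r :
  r \in map rk c -> elem_of_rank c r \in c.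
Proof. by move=> rc; rewrite mem_nth // -(size_map rk) index_mem. Qed.

Lemma rk_elem_of_rank (c : seq P) r :
  r \in map rk c -> rk (elem_of_rank c r) = r.
Proof.
move=> rc; rewrite -(nth_map x0 (rk x0)) ?nth_index //.
by rewrite -(size_map rk) index_mem.
Qed.

Lemma elem_of_rankK (c : seq P) y :
  sorted <=%O c -> y \in c -> elem_of_rank c (rk y) = y.
Proof.
move=> sc yc; have rk_yc := map_f rk yc.
by apply: (chain_rk_inj sc); rewrite ?elem_of_rank_mem ?rk_elem_of_rank.
Qed.

Local Notation expand c s := (map (elem_of_rank c) s).

Lemma expand_undup (t : seq P) :
  sorted <=%O t -> expand (undup t) (map rk t) = t.
Proof.
move=> st; rewrite -map_comp; apply: map_id_in => y yt /=.
by rewrite elem_of_rankK ?mem_undup ?(undup_sorted le_trans).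
Qed.

Section Expand.
Variables (c : seq P) (s : seq nat).
Hypotheses (c_chain : sorted <%O c) (c_ranks : map rk c = undup s).

Let c_le : sorted <=%O c.
Proof. by move: c_chain; rewrite lt_sorted_uniq_le => /andP[]. Qed.

Let s_ranks : {subset s <= map rk c}.
Proof. by move=> r; rewrite c_ranks mem_undup. Qed.

Lemma map_rk_expand : map rk (expand c s) = s.
Proof.
by rewrite -map_comp; apply: map_id_in => r /s_ranks /rk_elem_of_rank.
Qed.

Lemma expand_sorted : sorted leq s -> sorted <=%O (expand c s).
Proof.
move=> ss; apply: (homo_sorted_in (P := mem s) _ _ ss); last exact/allP.
move=> r1 r2 /s_ranks r1c /s_ranks r2c r12.
rewrite -(chain_rk_mono c_le) ?elem_of_rank_mem //.
by rewrite !rk_elem_of_rank.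
Qed.

Lemma undup_expand : sorted leq s -> undup (expand c s) = c.
Proof.
move=> ss; apply: (irr_sorted_eq lt_trans ltxx) => //.
  exact/undup_chain/expand_sorted.
move=> y; rewrite mem_undup; apply/mapP/idP => [[r /s_ranks rc ->]|yc].
  exact: elem_of_rank_mem.
exists (rk y); last by rewrite elem_of_rankK.
by rewrite -mem_undup -c_ranks map_f.
Qed.

End Expand.

Definition multichains_of_rank (m : nat) (s : seq nat) : {set m.-tuple P} :=
  [set t : m.-tuple P | sorted <=%O t & map rk t == s].

Lemma card_multichains_of_sorted_rank (s : seq nat) : sorted leq s ->
  #|multichains_of_rank (size s) s| = nchains rk (undup s).
Proof.
move=> ss; rewrite /nchains; set A := [set c | _].
have -> : multichains_of_rank (size s) s =
    [set map_tuple (elem_of_rank (val c)) (in_tuple s) | c in A].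
  apply/setP => t; rewrite inE; apply/andP/imsetP => [[st /eqP ts]|[c]].
    have size_undup : size (undup t) == size (undup s).
      by rewrite -(size_map rk) map_rk_undup // ts.
    exists (Tuple size_undup).
      by rewrite inE undup_chain //= map_rk_undup // ts.
    by apply: val_inj => /=; have := expand_undup st; rewrite ts => ->.
  rewrite inE => /andP[sc /eqP cs] ->.
  by rewrite /= map_rk_expand ?expand_sorted.
apply: card_in_imset => c1 c2; rewrite !inE => /andP[sc1 /eqP cs1].
move=> /andP[sc2 /eqP cs2] /(congr1 val) /= eq12.
by apply: val_inj => /=; rewrite -(undup_expand sc1 cs1 ss) eq12 undup_expand.
Qed.

End ElemOfRank.

Lemma card_multichains_of_rank (m : nat) (s : seq nat) :
  #|multichains_of_rank m s| =
    ((size s == m) && sorted leq s) * nchains rk (undup s).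
Proof.
case: (boolP ((size s == m) && sorted leq s)) => [/andP[/eqP <- ss]|not_rank].
  rewrite mul1n; have [x0 _|P0] := pickP (@predT P).
    exact: card_multichains_of_sorted_rank.
  have no_tuple k (Q : pred (k.-tuple P)) : 0 < k -> #|[set t | Q t]| = 0.
    by case: k Q => // k Q _; apply: eq_card0 => t; have := P0 (thead t).
  case: s ss => [|r s] _; first by apply: eq_card => t; rewrite !inE tuple0.
  have undup_pos : 0 < size (undup (r :: s)).
    have := mem_undup (r :: s) r; rewrite mem_head lt0n size_eq0.
    by apply: contraTneq => ->.
  by rewrite /nchains !no_tuple.
apply/eqP; rewrite cards_eq0; apply/eqP/setP => t; rewrite !inE.
apply: contraNF not_rank => /andP[st /eqP <-].
by rewrite size_map size_tuple eqxx (homo_sorted rk_le _ st).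
Qed.

Lemma multichain_sum_by_rank (L : seq (seq nat)) (n : nat) :
  uniq L -> (forall t : n.-1.-tuple P, map rk t \in L) ->
  multichain_sum rk n = (\sum_(s <- L) qvar ^+ (\sum_(r <- s) r)%N *+
      (((size s == n.-1) && sorted leq s) * nchains rk (undup s)))%R.
Proof.
move=> uniq_L ranks_L; rewrite /multichain_sum.
under eq_bigr => t _ do rewrite -(big_map rk predT id).
rewrite (sum_by_fibres _ (fun s => qvar ^+ (\sum_(r <- s) r)%N)%R
                       uniq_L ranks_L).
by apply: eq_bigr => s _; rewrite -card_multichains_of_rank.
Qed.

End ChainsByRank.

Unset Implicit Arguments. Set Strict Implicit.

Theorem mainTheorem20
  (d : Order.disp_t) (P : finPOrderType d) (rk : P -> nat)
  (d' : Order.disp_t) (P' : finPOrderType d') (rk' : P' -> nat) :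
  is_rank_function rk -> is_rank_function rk' ->
  (forall a : seq nat, sorted ltn a -> nchains rk a = nchains rk' a) ->
  forall Z Z' : {poly Qq}, is_qZeta rk Z -> is_qZeta rk' Z' -> Z = Z'.
Proof.
move=> [rk_covers _] [rk'_covers _] same_nchains Z Z' HZ HZ'.
apply: (poly_eq_on_injective (k := 2) qint_inj) => n n2; rewrite HZ // HZ' //.
set L := undup (codom (fun t : n.-1.-tuple P => map rk t) ++
                codom (fun t : n.-1.-tuple P' => map rk' t)).
have ranks_L (t : n.-1.-tuple P) : map rk t \in L
  by rewrite mem_undup mem_cat codom_f.
have ranks'_L (t : n.-1.-tuple P') : map rk' t \in L
  by rewrite mem_undup mem_cat codom_f orbT.
have rk_lt := covers_rk_lt rk_covers; have rk'_lt := covers_rk_lt rk'_covers.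
rewrite (multichain_sum_by_rank rk_lt (undup_uniq _) ranks_L).
rewrite (multichain_sum_by_rank rk'_lt (undup_uniq _) ranks'_L).
apply: eq_bigr => s _; case: andP => // -[_ ss]; rewrite same_nchains //.
by rewrite ltn_sorted_uniq_leq undup_uniq (undup_sorted leq_trans).
Qed.
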